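(* Let $\mathbb{F}$ be a field and $\mathcal{H}=(Q_0,Q_1,\beta)$ a directed tensor-labeled hypergraph. Then $$\dim_{\mathbb{F}}\mathcal{Z}(\mathcal{H})=|Q_1|-|V_{\mathrm{macro}}|+c_{\mathrm{macro}}+\delta(\mathcal{H}).$$
   Context: $Q_0,Q_1$ are finite sets (vertices, hyperedges). $T(\mathbb{F}^{Q_0})=\bigoplus_{k\ge0}(\mathbb{F}^{Q_0})^{\otimes k}$ is the tensor algebra. A directed tensor-labeled hypergraph is $\mathcal{H}=(Q_0,Q_1,\beta)$ with $\beta:\mathbb{F}^{Q_1}\to T(\mathbb{F}^{Q_0})\times T(\mathbb{F}^{Q_0})$ linear; write $\beta(\mathbf{1}_e)=(A_e,B_e)$ (source and target tensors). The tensor incidence map $\partial_\beta:\mathbb{F}^{Q_1}\to T(\mathbb{F}^{Q_0})$ is linear with $\partial_\beta(\mathbf{1}_e)=B_e-A_e$, and $\mathcal{Z}(\mathcal{H}):=\mathrm{Ker}(\partial_\beta)$. $V_{\mathrm{macro}}:=\{A_e\}_{e\in Q_1}\cup\{B_e\}_{e\in Q_1}\subset T(\mathbb{F}^{Q_0})$ (as a set). The macrograph $\mathcal{H}_{\mathrm{macro}}$ is the directed multigraph with vertex set $V_{\mathrm{macro}}$, edge set $Q_1$, source $e\mapsto A_e$, target $e\mapsto B_e$; $c_{\mathrm{macro}}$ is its number of weakly connected components and $B_{\mathrm{macro}}:\mathbb{F}^{Q_1}\to\mathbb{F}^{V_{\mathrm{macro}}}$ its incidence map $\mathbf{1}_e\mapsto\mathbf{1}_{B_e}-\mathbf{1}_{A_e}$.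 The evaluation map $\hat\phi:\mathbb{F}^{V_{\mathrm{macro}}}\to T(\mathbb{F}^{Q_0})$ is linear with $\mathbf{1}_w\mapsto w$. The defect invariant is $\delta(\mathcal{H}):=\dim_{\mathbb{F}}(\mathrm{Im}(B_{\mathrm{macro}})\cap\mathrm{Ker}(\hat\phi))$. *)

(* The tensor algebra T(F^{Q0}) is modelled as the monoid
   algebra of the free monoid on Q0 (multinomials' {malg F[{fmonom Q0}]}),
   whose basis is the set of words over Q0, i.e. the pure tensors
   e_{i1} (x) ... (x) e_{ik}.  Only its F-vector-space structure is used. *)
From HB Require Import structures.
From mathcomp Require Import all_boot all_algebra.
From mathcomp.multinomials Require Import monalg.

Set Implicit Arguments.
Unset Strict Implicit.
Unset Printing Implicit Defensive.

Import GRing.Theory.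
Local Open Scope ring_scope.

Definition tensor_alg (F : fieldType) (Q0 : finType) := {malg F[{fmonom Q0}]}.

Definition fvec (F : fieldType) (I : finType) := {ffun I -> F^o}.

Definition ind (F : fieldType) (I : finType) (e : I) : fvec F I :=
  [ffun e' => (e' == e)%:R].

Definition has_dim (F : fieldType) (vT : vectType F) (P : vT -> Prop) (n : nat) :=
  exists X : n.-tuple vT, free X /\ (forall v, P v <-> v \in <<X>>%VS).

Section Hypergraph.
Variables (F : fieldType) (Q0 Q1 : finType).
Variable beta : {linear fvec F Q1 -> (tensor_alg F Q0 * tensor_alg F Q0)%type}.

Definition srcT (e : Q1) : tensor_alg F Q0 := (beta (ind F e)).1.
Definition tgtT (e : Q1) : tensor_alg F Q0 := (beta (ind F e)).2.

Definition incidence (x : fvec F Q1) : tensor_alg F Q0 :=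
  \sum_(e : Q1) (x e : F) *: (tgtT e - srcT e).

Definition cycle_space (x : fvec F Q1) : Prop := incidence x = 0.

Definition vmacro_seq : seq (tensor_alg F Q0) :=
  [seq srcT e | e <- enum Q1] ++ [seq tgtT e | e <- enum Q1].
Definition Vmacro : finType := seq_sub vmacro_seq.

(* underlying (symmetrized) adjacency of the macrograph: weak connectivity *)
Definition macro_adj : rel Vmacro := fun v w =>
  [exists e : Q1, ((ssval v == srcT e) && (ssval w == tgtT e))
               || ((ssval v == tgtT e) && (ssval w == srcT e))].

Definition c_macro : nat := n_comp macro_adj Vmacro.

Definition B_macro (x : fvec F Q1) : fvec F Vmacro :=
  [ffun w => \sum_(e : Q1) (x e : F) *
              ((ssval w == tgtT e)%:R - (ssval w == srcT e)%:R)].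

Definition eval_macro (y : fvec F Vmacro) : tensor_alg F Q0 :=
  \sum_(w : Vmacro) (y w : F) *: ssval w.

Definition defect_space (y : fvec F Vmacro) : Prop :=
  (exists x, B_macro x = y) /\ eval_macro y = 0.

End Hypergraph.

(* The tensor incidence map factors as the evaluation map after the incidence
   map of the macrograph, so Z(H) is the preimage of Ker(evaluation) under
   B_macro and rank-nullity gives dim Z = dim Ker B_macro + delta.  The image
   of the incidence map of a graph is the space of vertex weightings summing
   to zero on every weakly connected component, so rank B_macro = |V| - c and
   dim Ker B_macro = |Q1| - |V| + c. *)
From HB Require Import structures.
From mathcomp Require Import all_boot all_algebra.
From mathcomp.multinomials Require Import monalg.
From mathcomp Require Import finmap ring.

Set Implicit Arguments.
Unset Strict Implicit.
Unset Printing Implicit Defensive.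

Import GRing.Theory.
Local Open Scope ring_scope.

Lemma dim_lpreim (F : fieldType) (aT rT : vectType F) (f : 'Hom(aT, rT))
    (W : {vspace rT}) :
  \dim (f @^-1: W) = (\dim (lker f) + \dim (limg f :&: W))%N.
Proof.
have := limg_ker_dim f (f @^-1: W).
rewrite (capv_idPr _); last by rewrite -lpreim0 lpreimS ?sub0v.
by rewrite -lpreim_cap_limg lpreimK ?capvSr // capvC => <-.
Qed.

Lemma has_dim_vspace (F : fieldType) (vT : vectType F) (P : vT -> Prop)
    (W : {vspace vT}) :
  (forall v, P v <-> v \in W) -> has_dim P (\dim W).
Proof.
move=> PW; exists (vbasis W); split; first exact: basis_free (vbasisP W).
by move=> v; rewrite (span_basis (vbasisP W)).
Qed.

Lemma dim_fvec (F : fieldType) (I : finType) :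
  \dim (fullv : {vspace fvec F I}) = #|I|.
Proof. by rewrite dimvf /dim /= muln1. Qed.

Lemma fvecZE (F : fieldType) (I : finType) (a : F) (f : fvec F I) i :
  (a *: f) i = a * f i.
Proof. by rewrite ffunE. Qed.

Section LinearCombinationKernel.
Variables (F : fieldType) (K : choiceType) (I : finType) (t : I -> {malg F[K]}).

Definition lincomb (y : fvec F I) : {malg F[K]} := \sum_i (y i : F) *: t i.

Fact lincomb_is_linear : linear lincomb.
Proof.
move=> a y z; rewrite /lincomb scaler_sumr -big_split; apply: eq_bigr => i _.
by rewrite !ffunE scalerDl scalerA.
Qed.
HB.instance Definition _ :=
  GRing.isLinear.Build F (fvec F I) {malg F[K]} _ lincomb lincomb_is_linear.

Lemma lincomb_ind i : lincomb (ind F i) = t i.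
Proof.
rewrite /lincomb (bigD1 i) //= big1 => [|j ji]; first by rewrite ffunE eqxx scale1r addr0.
by rewrite ffunE (negbTE ji) scale0r.
Qed.

Definition lincomb_supp : {fset K} := (\bigcup_(i <- enum I) msupp (t i))%fset.

(* [lincomb y] is determined by its coefficients on the finite set
   [lincomb_supp], which makes its kernel a subspace of F^I. *)
Definition lincomb_coef (y : fvec F I) : fvec F lincomb_supp :=
  [ffun k => (lincomb y)@_(val k)].

Fact lincomb_coef_is_linear : linear lincomb_coef.
Proof.
move=> a y z; apply/ffunP=> k; rewrite /lincomb_coef !ffunE linearP /=.
by rewrite mcoeffD; congr (_ + _); apply: mcoeffZ.
Qed.
HB.instance Definition _ := GRing.isLinear.Build F (fvec F I)
  (fvec F lincomb_supp) _ lincomb_coef lincomb_coef_is_linear.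

Lemma lincomb_eq0 y : (lincomb y == 0) = (y \in lker (linfun lincomb_coef)).
Proof.
rewrite memv_ker lfunE /=; apply/eqP/eqP => [y0 | coef0].
  by apply/ffunP => k; rewrite !ffunE y0 mcoeff0.
apply/malgP => k; rewrite mcoeff0.
have [kS | kNS] := boolP (k \in lincomb_supp).
  by move/ffunP: coef0 => /(_ [` kS]%fset); rewrite !ffunE.
rewrite /lincomb raddf_sum big1 // => i _; apply: etrans (mcoeffZ _ _ _) _.
rewrite mcoeff_outdom ?mulr0 //.
by apply: contra kNS => ki; apply/bigfcupP; exists i; rewrite ?mem_enum.
Qed.

End LinearCombinationKernel.

Lemma memv_connect_diff (F : fieldType) (vT : vectType F) (T : finType)
    (e : rel T) (W : {vspace vT}) (f : T -> vT) :
    (forall v w, e v w -> f w - f v \in W) ->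
  forall v w, connect e v w -> f w - f v \in W.
Proof.
move=> eW v w /connectP[p]; elim: p v => [|u p IHp] v /=.
  by move=> _ ->; rewrite subrr mem0v.
case/andP => evu pu wE; rewrite -[f w](subrK (f u)) -addrA.
rewrite memvD //; [exact: IHp | exact: eW].
Qed.

Local Notation root := fingraph.root.

Section ComponentSums.
Variables (F : fieldType) (T : finType) (e : rel T).
Hypothesis e_sym : connect_sym e.

Definition comp_root := {r : T | roots e r}.

Lemma card_comp_root : #|{: comp_root}| = n_comp e T.
Proof. by rewrite card_sig; apply: eq_card => x; rewrite !inE andbT. Qed.

Definition comp_sum (y : fvec F T) : fvec F comp_root :=
  [ffun r => \sum_(w | root e w == val r) y w].

Fact comp_sum_is_linear : linear comp_sum.
Proof.
move=> a y z; apply/ffunP=> r; rewrite !ffunE scaler_sumr -big_split /=.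
by apply: eq_bigr => w _; rewrite !ffunE.
Qed.
HB.instance Definition _ := GRing.isLinear.Build F (fvec F T)
  (fvec F comp_root) _ comp_sum comp_sum_is_linear.

Lemma comp_sum_ind w : comp_sum (ind F w) = [ffun r => (root e w == val r)%:R].
Proof.
apply/ffunP => r; rewrite !ffunE big_mkcond (bigD1 w) //= !ffunE eqxx.
rewrite big1 ?addr0 => [|v /negbTE vw]; first by case: ifP.
by rewrite ffunE vw; case: ifP.
Qed.

Lemma comp_sum_connect v w : connect e v w -> comp_sum (ind F w - ind F v) = 0.
Proof.
by move=> /(fingraph.rootP e_sym) vw; rewrite linearB /= !comp_sum_ind vw subrr.
Qed.

Lemma limg_comp_sum : limg (linfun comp_sum) = fullv.
Proof.
apply/vspaceP => z; rewrite memvf; apply/memv_imgP.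
exists (\sum_(r : comp_root) z r *: ind F (val r)); first exact: memvf.
rewrite lfunE /= linear_sum; apply/ffunP => r; rewrite sum_ffunE (bigD1 r) //=.
rewrite big1 => [|s sr]; rewrite linearZ /= comp_sum_ind !ffunE.
  by rewrite (eqP (valP r)) eqxx addr0; apply/esym/mulr1.
by rewrite (eqP (valP s)) (inj_eq val_inj) (negbTE sr) scaler0.
Qed.

Lemma dim_lker_comp_sum : (\dim (lker (linfun comp_sum)) + n_comp e T)%N = #|T|.
Proof.
have := limg_ker_dim (linfun comp_sum) fullv.
by rewrite capfv limg_comp_sum !dim_fvec card_comp_root.
Qed.

Lemma comp_sum_eq0_decomp y :
  comp_sum y = 0 -> y = \sum_w y w *: (ind F w - ind F (root e w)).
Proof.
move=> y0; apply/ffunP => u; rewrite sum_ffunE.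
under eq_bigr => w _ do rewrite fvecZE !ffunE mulrBr.
rewrite sumrB (bigD1 u) //= big1 => [|w wu]; last by rewrite eq_sym (negbTE wu) mulr0.
rewrite eqxx mulr1 addr0 -[LHS]subr0; congr (_ - _).
under eq_bigr => w _ do rewrite mulr_natr mulrb eq_sym.
rewrite -big_mkcond /=; have [uR | uNR] := boolP (roots e u).
  by move/ffunP: y0 => /(_ (exist _ u uR)); rewrite !ffunE.
by rewrite big_pred0 // => w; apply: contraNF uNR => /eqP <-; apply/eqP/root_root.
Qed.

Lemma edge_closed_lker_comp_sum (W : {vspace fvec F T}) :
    (forall v w, e v w -> ind F w - ind F v \in W) ->
    (W <= lker (linfun comp_sum))%VS ->
  W = lker (linfun comp_sum).
Proof.
move=> eW WK; apply/subv_anti; rewrite WK; apply/subvP => y.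
rewrite memv_ker lfunE /=.
move=> /eqP/comp_sum_eq0_decomp ->; apply: rpred_sum => w _; apply: memvZ.
rewrite -opprB memvN; apply: memv_connect_diff eW _ _ _.
exact: connect_root.
Qed.

End ComponentSums.

Section Macrograph.
Variables (F : fieldType) (Q0 Q1 : finType).
Variable beta : {linear fvec F Q1 -> (tensor_alg F Q0 * tensor_alg F Q0)%type}.
Local Notation V := (Vmacro beta).
Local Notation adj := (@macro_adj F Q0 Q1 beta).
Local Notation eval := (@eval_macro F Q0 Q1 beta).

Lemma srcT_in_vmacro e : srcT beta e \in vmacro_seq beta.
Proof. by rewrite mem_cat; apply/orP; left; apply: map_f; rewrite mem_enum. Qed.

Lemma tgtT_in_vmacro e : tgtT beta e \in vmacro_seq beta.
Proof. by rewrite mem_cat; apply/orP; right; apply: map_f; rewrite mem_enum. Qed.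

Definition srcV e : V := SeqSub (srcT_in_vmacro e).
Definition tgtV e : V := SeqSub (tgtT_in_vmacro e).

Lemma macro_adj_sym : symmetric adj.
Proof.
move=> v w; apply/existsP/existsP => -[e vw]; exists e;
  by case/orP: vw => /andP[-> ->]; rewrite ?orbT.
Qed.

Lemma macro_adjP v w :
  adj v w -> exists e, (v, w) = (srcV e, tgtV e) \/ (v, w) = (tgtV e, srcV e).
Proof.
case/existsP => e /orP[] /andP[/eqP vE /eqP wE]; exists e; [left | right];
  by congr pair; apply: val_inj.
Qed.

Lemma B_macroE x :
  B_macro beta x = \sum_e (x e : F) *: (ind F (tgtV e) - ind F (srcV e)).
Proof.
apply/ffunP=> u; rewrite ffunE sum_ffunE; apply: eq_bigr => e _.
by rewrite !ffunE -!(inj_eq val_inj).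
Qed.

Fact B_macro_is_linear : linear (B_macro beta).
Proof.
move=> a x y; rewrite !B_macroE scaler_sumr -big_split; apply: eq_bigr => e _.
by rewrite !ffunE scalerDl scalerA.
Qed.
HB.instance Definition _ := GRing.isLinear.Build F (fvec F Q1) (fvec F V) _
  (B_macro beta) B_macro_is_linear.

Lemma B_macro_ind e : B_macro beta (ind F e) = ind F (tgtV e) - ind F (srcV e).
Proof.
rewrite B_macroE (bigD1 e) //= big1 => [|f fe]; first by rewrite ffunE eqxx scale1r addr0.
by rewrite ffunE (negbTE fe) scale0r.
Qed.

Lemma B_macro_in_limg x : B_macro beta x \in limg (linfun (B_macro beta)).
Proof. by have := memv_img (linfun (B_macro beta)) (memvf x); rewrite lfunE. Qed.

Lemma eval_macro_lincomb y : eval y = lincomb (fun w : V => ssval w) y.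
Proof. by []. Qed.

Lemma incidence_eval_macro x : incidence beta x = eval (B_macro beta x).
Proof.
rewrite eval_macro_lincomb B_macroE linear_sum; apply: eq_bigr => e _.
rewrite linearZ /=; congr (_ *: _).
by rewrite raddfB; congr (_ - _); apply/esym/lincomb_ind.
Qed.

Lemma dim_limg_B_macro :
  (\dim (limg (linfun (B_macro beta))) + c_macro beta)%N = #|V|.
Proof.
have adj_csym : connect_sym adj := sym_connect_sym macro_adj_sym.
rewrite /c_macro -(dim_lker_comp_sum F adj); congr (\dim _ + _)%N.
apply: (edge_closed_lker_comp_sum adj_csym).
  move=> v w /macro_adjP[e [] [-> ->]]; last rewrite -opprB memvN;
    by rewrite -B_macro_ind B_macro_in_limg.
apply/subvP => _ /memv_imgP[x _ ->]; rewrite memv_ker !lfunE /= B_macroE.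
rewrite linear_sum big1 // => e _; rewrite linearZ /= comp_sum_connect ?scaler0 //.
by apply/connect1/existsP; exists e; rewrite !eqxx.
Qed.

End Macrograph.

Theorem theorem3p14 (F : fieldType) (Q0 Q1 : finType)
  (beta : {linear fvec F Q1 -> (tensor_alg F Q0 * tensor_alg F Q0)%type}) :
  exists dimZ delta : nat,
    [/\ has_dim (@cycle_space F Q0 Q1 beta) dimZ,
        has_dim (@defect_space F Q0 Q1 beta) delta &
        (dimZ%:Z = #|Q1|%:Z - #|Vmacro beta|%:Z + (c_macro beta)%:Z + delta%:Z)%R].
Proof.
set B := linfun (B_macro beta).
set W := lker (linfun (lincomb_coef (fun w : Vmacro beta => ssval w))).
have eval0 y : (eval_macro y == 0) = (y \in W).
  by rewrite eval_macro_lincomb lincomb_eq0.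
exists (\dim (B @^-1: W)), (\dim (limg B :&: W)); split.
- apply: has_dim_vspace => x; rewrite -memv_preim lfunE -eval0.
  by rewrite /cycle_space incidence_eval_macro; split=> /eqP.
- apply: has_dim_vspace => y; rewrite memv_cap -eval0; split.
    by case=> -[x <-] /eqP ->; rewrite B_macro_in_limg.
  by case/andP=> /memv_imgP[x _ ->] /eqP; rewrite lfunE; split; first exists x.
have rank_nullity := limg_ker_dim B fullv.
rewrite capfv !dim_fvec in rank_nullity.
rewrite dim_lpreim -rank_nullity -(dim_limg_B_macro beta) !PoszD; ring.
Qed.
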